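(* Let $\Gamma=(V,E,w)$ be a finite simple weighted digraph with vertex set $V=\{1,\dots,n\}$ and weights $0\le w_{ij}\le 1$ (with $w_{ij}=0$ iff $(i,j)\notin E$), and let $L=D-A$ be its graph Laplacian. Then $\Gamma$ is a complete dominance graph if and only if $\sigma(L)=\{d^{+}(1),d^{+}(2),\dots,d^{+}(n)\}=\{n-1,n-2,\dots,0\}$ (as multisets).
   Context: $d^{+}(i)=\sum_{j\in V} w_{ij}$, $D=\mathrm{diag}(d^{+}(1),\dots,d^{+}(n))$, $A=[w_{ij}]$, $L=D-A$; $\sigma(L)$ is the multiset of eigenvalues of $L$. A tournament is a digraph such that for each pair of distinct vertices $i,j$ exactly one of $(i,j),(j,i)$ is an edge. A complete dominance graph is an acyclic tournament in which every edge has weight $1$. *)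

From HB Require Import structures.
From mathcomp Require Import all_boot all_order all_algebra.
From mathcomp Require Import reals.
Set Implicit Arguments. Unset Strict Implicit. Unset Printing Implicit Defensive.
Import Order.TTheory GRing.Theory Num.Theory.
Local Open Scope ring_scope.

(* A weighted digraph on V = 'I_n is given by its weight matrix w = [w_ij]. *)
Section Digraph.
Variables (R : realType) (n : nat).

Definition outdeg (w : 'M[R]_n) (i : 'I_n) : R := \sum_(j < n) w i j.

Definition degmx (w : 'M[R]_n) : 'M[R]_n := diag_mx (\row_i outdeg w i).

Definition laplacian (w : 'M[R]_n) : 'M[R]_n := degmx w - w.

Definition edge (w : 'M[R]_n) : rel 'I_n := fun i j => w i j != 0.

Definition is_tournament (w : 'M[R]_n) : Prop :=
  forall i j : 'I_n, i != j -> (edge w i j) (+) (edge w j i).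

Definition acyclic (w : 'M[R]_n) : Prop :=
  forall i j : 'I_n, edge w i j -> ~~ connect (edge w) j i.

Definition complete_dominance (w : 'M[R]_n) : Prop :=
  [/\ is_tournament w, acyclic w & forall i j, edge w i j -> w i j = 1].

End Digraph.

From HB Require Import structures.
From mathcomp Require Import all_boot all_order all_algebra.
From mathcomp Require Import reals fingroup perm.
From mathcomp.real_closed Require Import complex.
From mathcomp.algebra_tactics Require Import ring.

(* If the graph is a complete dominance graph, out-degrees strictly decrease
   along edges: hence only the identity permutation contributes to
   det(X - L), and the out-degrees are n distinct integers in [0, n).
   Conversely, if sigma(L) = {d^+(i)}, triangularizing L over the complex
   numbers gives tr L^2 = sum d_i^2 and tr L^3 = sum d_i^3.  Expanding these
   traces as sums over closed walks shows that every directed 2-cycle and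
   3-cycle has weight 0; then sum d_i = n(n-1)/2 forces w_ij + w_ji = 1 for
   i <> j, so the edge relation is a transitive tournament with unit
   weights. *)

Set Implicit Arguments. Unset Strict Implicit. Unset Printing Implicit Defensive.
Import Order.TTheory GRing.Theory Num.Theory.
Local Open Scope ring_scope.

Section TriangularPowers.
Variables (F : comNzRingType) (n : nat).
Implicit Types A B : 'M[F]_n.

Lemma is_trig_mxM A B : is_trig_mx A -> is_trig_mx B -> is_trig_mx (A *m B).
Proof.
move=> /is_trig_mxP tA /is_trig_mxP tB; apply/is_trig_mxP => i j lt_ij.
rewrite mxE big1 // => k _; have [lt_ik|le_ki] := ltnP i k.
  by rewrite tA ?mul0r.
by rewrite tB ?mulr0 // (leq_ltn_trans le_ki lt_ij).
Qed.

Lemma trig_mxM_diag A B i :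
  is_trig_mx A -> is_trig_mx B -> (A *m B) i i = A i i * B i i.
Proof.
move=> /is_trig_mxP tA /is_trig_mxP tB.
rewrite mxE (bigD1 i) //= big1 ?addr0 // => k ne_ki.
have [lt_ik|lt_ki|/val_inj eq_ik] := ltngtP i k; first by rewrite tA ?mul0r.
  by rewrite tB ?mulr0.
by rewrite eq_ik eqxx in ne_ki.
Qed.

Lemma trig_mxX A k :
  is_trig_mx A -> is_trig_mx (A ^+ k) /\ forall i, (A ^+ k) i i = A i i ^+ k.
Proof.
move=> tA; elim: k => [|k [tAk dAk]].
  by split=> [|i]; rewrite expr0 ?scalar_mx_is_trig // mxE eqxx.
split=> [|i]; rewrite exprS -mulmxE; first exact: is_trig_mxM.
by rewrite trig_mxM_diag // dAk exprS.
Qed.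

End TriangularPowers.

Section Similarity.
Variables (F : fieldType) (n : nat) (P : 'M[F]_n).
Hypothesis P_unit : P \in unitmx.

Lemma mxtrace_conj A : \tr (P *m A *m invmx P) = \tr A.
Proof. by rewrite mxtrace_mulC mulmxA mulVmx // mul1mx. Qed.

Lemma conj_mxX A k : (P *m A *m invmx P) ^+ k = P *m A ^+ k *m invmx P.
Proof.
elim: k => [|k IHk]; first by rewrite !expr0 mulmx1 mulmxV.
by rewrite !exprS IHk -!mulmxE !mulmxA mulmxKV.
Qed.

Lemma char_poly_conj A : char_poly (P *m A *m invmx P) = char_poly A.
Proof.
rewrite /char_poly; pose Pp := map_mx polyC P; pose Pi := map_mx polyC (invmx P).
have PPi : Pp *m Pi = 1%:M by rewrite -map_mxM mulmxV // map_mx1.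
have -> : char_poly_mx (P *m A *m invmx P) = Pp *m char_poly_mx A *m Pi.
  rewrite /char_poly_mx mulmxBr mulmxBl !map_mxM.
  by rewrite mul_mx_scalar -scalemxAl -mul_mx_scalar PPi mul1mx.
by rewrite !det_mulmx mulrAC -det_mulmx PPi det1 mul1r.
Qed.

End Similarity.

Lemma mxtrace_exp_char_poly (C : numClosedFieldType) n (A : 'M[C]_n)
    (a : 'I_n -> C) k :
  char_poly A = \prod_(i < n) ('X - (a i)%:P) -> \tr (A ^+ k) = \sum_i a i ^+ k.
Proof.
case: n => [|n] in A a *; first by rewrite /mxtrace !big_ord0.
move=> charA; have [P /unitarymx_unit uP] := Schur A isT.
rewrite /similar_to conjumx // => trigT.
have [trigTk diagTk] := trig_mxX k trigT.
set T := P *m A *m invmx P in trigT diagTk *.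
have eq_diag : perm_eq [seq T i i | i <- index_enum 'I_n.+1]
                       [seq a i | i <- index_enum 'I_n.+1].
  by apply: prod_XsubC_eq; rewrite !big_map -charA -char_poly_trig ?char_poly_conj.
rewrite -(mxtrace_conj uP) -conj_mxX // -/T.
transitivity (\sum_(x <- [seq T i i | i <- index_enum 'I_n.+1]) x ^+ k).
  by rewrite big_map; apply: eq_bigr => i _; rewrite diagTk.
by rewrite (perm_big _ eq_diag) big_map.
Qed.

Lemma map_mxX (R S : pzSemiRingType) (f : {rmorphism R -> S}) n (A : 'M[R]_n) k :
  map_mx f (A ^+ k) = map_mx f A ^+ k.
Proof.
elim: k => [|k IHk]; first by rewrite !expr0 map_mx1.
by rewrite !exprS -!mulmxE map_mxM IHk.
Qed.

Lemma mxtrace_exp_char_poly_rmorph (F : fieldType) (C : numClosedFieldType)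
    (f : {rmorphism F -> C}) n (A : 'M[F]_n) (a : 'I_n -> F) k :
  char_poly A = \prod_(i < n) ('X - (a i)%:P) -> \tr (A ^+ k) = \sum_i a i ^+ k.
Proof.
move=> charA; apply: (fmorph_inj f).
have -> : f (\tr (A ^+ k)) = \tr (map_mx f A ^+ k).
  by rewrite -map_mxX /mxtrace rmorph_sum; apply: eq_bigr => i _; rewrite mxE.
rewrite rmorph_sum; under eq_bigr do rewrite rmorphXn.
apply: mxtrace_exp_char_poly; rewrite -map_char_poly charA rmorph_prod.
by apply: eq_bigr => i _; apply: map_polyXsubC.
Qed.

Lemma mxtrace_exp2 (R : pzSemiRingType) n (A : 'M[R]_n) :
  \tr (A ^+ 2) = \sum_i \sum_j A i j * A j i.
Proof. by apply: eq_bigr => i _; rewrite expr2 -mulmxE mxE. Qed.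

Lemma mxtrace_exp3 (R : pzSemiRingType) n (A : 'M[R]_n) :
  \tr (A ^+ 3) = \sum_i \sum_j \sum_k A i j * A j k * A k i.
Proof.
apply: eq_bigr => i _; rewrite exprS expr2 -!mulmxE mxE.
apply: eq_bigr => j _; rewrite mxE mulr_sumr.
by apply: eq_bigr => k _; rewrite mulrA.
Qed.

Lemma psumr2_eq0 (R : numDomainType) (I J : finType) (F : I -> J -> R) :
  (forall i j, 0 <= F i j) -> \sum_i \sum_j F i j = 0 -> forall i j, F i j = 0.
Proof.
move=> F_ge0 F0 i j.
have Fi0 := @psumr_eq0P _ _ _ _ (fun i _ => sumr_ge0 _ (fun j _ => F_ge0 i j))
  F0 i isT.
exact: @psumr_eq0P _ _ _ _ (fun j _ => F_ge0 i j) Fi0 j isT.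
Qed.

Lemma sumr_delta (R : pzSemiRingType) n (i : 'I_n) (F : 'I_n -> R) :
  \sum_j (i == j)%:R * F j = F i.
Proof.
rewrite (bigD1 i) //= eqxx mul1r big1 ?addr0 // => j ne_ji.
by rewrite eq_sym (negbTE ne_ji) mul0r.
Qed.

Lemma sumr_ord_nat (R : comNzRingType) n :
  2 * \sum_(k < n) (k%:R : R) = n%:R * (n%:R - 1).
Proof.
elim: n => [|n IHn]; first by rewrite big_ord0 mulr0 mul0r.
by rewrite big_ord_recr /= mulrDr IHn -addn1 natrD; ring.
Qed.

Lemma sumr_offdiag (R : comNzRingType) n :
  \sum_(i < n) \sum_(j < n) ((i != j)%:R : R) = n%:R * (n%:R - 1).
Proof.
transitivity (\sum_(i < n) (n%:R - 1 : R)); last first.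
  by rewrite sumr_const card_ord mulr_natl.
apply: eq_bigr => i _.
transitivity (\sum_(j < n) (1 - (i == j)%:R * 1) : R).
  by apply: eq_bigr => j _; case: (i == j); rewrite ?mulr1 ?subrr ?subr0.
by rewrite sumrB sumr_delta sumr_const card_ord.
Qed.

Lemma perm_potential_eq1 (T : finType) (R : numDomainType) (s : {perm T})
    (f : T -> R) :
  (forall i, s i != i -> f (s i) < f i) -> s = 1%g.
Proof.
move=> f_desc; apply/permP => i; rewrite perm1; apply/eqP/negPn/negP => s_i.
have f_ge0 j : 0 <= f j - f (s j).
  by have [->|/f_desc/ltW] := eqVneq (s j) j; rewrite ?subrr // subr_ge0.
have sum_fs : \sum_j f (s j) = \sum_j f j.
  exact: esym (reindex_inj (@perm_inj _ s)).
have : \sum_j (f j - f (s j)) = 0 by rewrite sumrB sum_fs subrr.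
move/(psumr_eq0P (fun j _ => f_ge0 j))/(_ i isT)/eqP; rewrite subr_eq0 => /eqP fi.
by have := f_desc i s_i; rewrite fi ltxx.
Qed.

Lemma det_potential (F : comNzRingType) (R : numDomainType) n (A : 'M[F]_n)
    (f : 'I_n -> R) :
  (forall i j, i != j -> A i j != 0 -> f j < f i) -> \det A = \prod_i A i i.
Proof.
move=> A_potential; rewrite /determinant (bigD1 (1%g : {perm 'I_n})) //=.
rewrite odd_perm1 expr0 mul1r [X in _ + X]big1 ?addr0 => [|s s_neq1].
  by apply: eq_bigr => i _; rewrite perm1.
have [i /eqP A_is0] : exists i, A i (s i) == 0.
  apply/existsP; apply: contraNT s_neq1 => /existsPn A_s_nz; apply/eqP.
  apply: (@perm_potential_eq1 _ _ s f) => i s_i.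
  by apply: A_potential; rewrite // eq_sym.
by rewrite (bigD1 i) // /= A_is0 mul0r mulr0.
Qed.

Lemma char_poly_potential (F : comNzRingType) (R : numDomainType) n
    (A : 'M[F]_n) (f : 'I_n -> R) :
  (forall i j, i != j -> A i j != 0 -> f j < f i) ->
  char_poly A = \prod_i ('X - (A i i)%:P).
Proof.
move=> A_potential; rewrite /char_poly (det_potential (f := f)) => [|i j ne_ij].
  by apply: eq_bigr => i _; rewrite !mxE eqxx.
by rewrite !mxE (negbTE ne_ij) mulr0n sub0r oppr_eq0 polyC_eq0; apply: A_potential.
Qed.

Lemma connect_transitive (T : finType) (e : rel T) x y :
  transitive e -> connect e x y -> (x == y) || e x y.
Proof.
move=> e_trans /connectP [p]; elim: p x => [|z p IHp] x /=.
  by move=> _ ->; rewrite eqxx.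
move=> /andP [e_xz p_z] y_last.
have /orP [/eqP <-|e_zy] := IHp z p_z y_last; first by rewrite e_xz orbT.
by rewrite (e_trans z) ?orbT.
Qed.

Lemma perm_iota_inj n (f : 'I_n -> nat) :
  injective f -> (forall i, f i < n)%N -> perm_eq [seq f i | i <- enum 'I_n] (iota 0 n).
Proof.
move=> f_inj f_lt; have f_uniq : uniq [seq f i | i <- enum 'I_n].
  by rewrite map_inj_uniq ?enum_uniq.
apply: uniq_perm; rewrite ?iota_uniq //.
apply: (uniq_min_size f_uniq _ _).2 => [x /mapP [i _ ->]|].
  by rewrite mem_iota f_lt.
by rewrite size_map size_iota size_enum_ord.
Qed.

Section LaplacianTraces.
Variables (R : realType) (n : nat) (w : 'M[R]_n).
Hypothesis w_diag0 : forall i, w i i = 0.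
Local Notation d := (outdeg w).
Local Notation L := (laplacian w).

Lemma laplacianE i j : L i j = (i == j)%:R * d i - w i j.
Proof. by rewrite !mxE mulr_natl. Qed.

Lemma laplacian_diag i : L i i = d i.
Proof. by rewrite laplacianE eqxx mul1r w_diag0 subr0. Qed.

Lemma laplacian_offdiag i j : i != j -> L i j = - w i j.
Proof. by move=> ne_ij; rewrite laplacianE (negbTE ne_ij) mul0r sub0r. Qed.

Lemma mxtrace_laplacian_exp2 :
  \tr (L ^+ 2) = \sum_i d i ^+ 2 + \sum_i \sum_j w i j * w j i.
Proof.
rewrite mxtrace_exp2 -big_split; apply: eq_bigr => i _ /=.
rewrite (bigD1 i) //= [\sum_j w i j * _](bigD1 i) //=.
rewrite laplacian_diag w_diag0 mul0r add0r; congr (_ + _).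
by apply: eq_bigr => j ne_ji; rewrite !laplacian_offdiag ?mulrNN // eq_sym.
Qed.

Lemma mxtrace_laplacian_exp3 : (forall i j, w i j * w j i = 0) ->
  \tr (L ^+ 3) = \sum_i d i ^+ 3 - \sum_i \sum_j \sum_k w i j * w j k * w k i.
Proof.
move=> no_2cycle.
have L2 i j : L i j * L j i = (i == j)%:R * d i ^+ 2.
  have [<-|ne_ij] := eqVneq i j; first by rewrite laplacian_diag mul1r expr2.
  by rewrite !laplacian_offdiag ?mulrNN ?no_2cycle ?(negbTE ne_ij) ?mul0r // eq_sym.
(* Once 2-cycles vanish, only constant closed walks and triangles survive. *)
have L3 i j k : L i j * L j k * L k i =
    (i == j)%:R * ((j == k)%:R * d i ^+ 3) - w i j * w j k * w k i.
  have [<-|ne_ij] := eqVneq i j.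
    by rewrite laplacian_diag -mulrA L2 w_diag0 /=; ring.
  have [<-|ne_jk] := eqVneq j k.
    by rewrite laplacian_diag mulrAC L2 w_diag0 (negbTE ne_ij) /=; ring.
  have [->|ne_ki] := eqVneq k i.
    by rewrite L2 w_diag0 (negbTE ne_ij) /=; ring.
  by rewrite !laplacian_offdiag //=; ring.
rewrite mxtrace_exp3 -sumrB; apply: eq_bigr => i _.
under eq_bigr => j _.
  under eq_bigr do rewrite L3.
  rewrite sumrB -mulr_sumr sumr_delta.
  over.
by rewrite sumrB sumr_delta.
Qed.

End LaplacianTraces.

Lemma edge_irrefl (R : realType) n (w : 'M[R]_n) i : w i i = 0 -> ~~ edge w i i.
Proof. by rewrite /edge => ->; rewrite eqxx. Qed.

Section SpectralConverse.
Variables (R : realType) (n : nat) (w : 'M[R]_n).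
Hypothesis w_diag0 : forall i, w i i = 0.
Hypothesis w_range : forall i j, 0 <= w i j <= 1.
Local Notation d := (outdeg w).
Local Notation L := (laplacian w).

Let w_ge0 i j : 0 <= w i j. Proof. by case/andP: (w_range i j). Qed.

Lemma no_2cycle_of_mxtrace : \tr (L ^+ 2) = \sum_i d i ^+ 2 ->
  forall i j, w i j * w j i = 0.
Proof.
rewrite mxtrace_laplacian_exp2 // => /eqP; rewrite -subr_eq0 addrC addKr => /eqP.
by apply: psumr2_eq0 => i j; apply: mulr_ge0.
Qed.

Lemma no_3cycle_of_mxtrace : (forall i j, w i j * w j i = 0) ->
  \tr (L ^+ 3) = \sum_i d i ^+ 3 -> forall i j k, w i j * w j k * w k i = 0.
Proof.
move=> no_2cycle; rewrite mxtrace_laplacian_exp3 // => /eqP.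
rewrite -subr_eq0 addrAC subrr sub0r oppr_eq0 => /eqP sum0 i j k.
have w3_ge0 i' j' k' : 0 <= w i' j' * w j' k' * w k' i' by rewrite !mulr_ge0.
have := psumr2_eq0 (fun i' j' => sumr_ge0 _ (fun k' _ => w3_ge0 i' j' k')) sum0 i j.
by move/(psumr_eq0P (fun k' _ => w3_ge0 i j k'))/(_ k isT).
Qed.

Lemma sum_outdeg_of_perm_eq :
  perm_eq [seq d i | i <- enum 'I_n] [seq (k%:R : R) | k <- iota 0 n] ->
  \sum_i d i = \sum_(k < n) (k%:R : R).
Proof.
move=> deg_perm; rewrite -(big_mkord xpredT (fun k => k%:R)) /index_iota subn0.
have := perm_big (op := +%R) (x := 0) (P := predT) (F := id) _ deg_perm.
by rewrite !big_map.
Qed.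

Lemma weights_pair_sum1 : (forall i j, w i j * w j i = 0) ->
  perm_eq [seq d i | i <- enum 'I_n] [seq (k%:R : R) | k <- iota 0 n] ->
  forall i j, i != j -> w i j + w j i = 1.
Proof.
move=> no_2cycle /sum_outdeg_of_perm_eq sum_d.
(* Each [g i j] is nonnegative, and the degree sum n(n-1)/2 makes their total 0. *)
pose g i j := (i != j)%:R - (w i j + w j i).
have g_ge0 i j : 0 <= g i j.
  rewrite /g; have [<-|ne_ij] := eqVneq i j; first by rewrite w_diag0 addr0 subr0.
  have /eqP := no_2cycle i j; rewrite mulf_eq0 => /orP [] /eqP ->.
    by rewrite add0r subr_ge0; case/andP: (w_range j i).
  by rewrite addr0 subr_ge0; case/andP: (w_range i j).
have sum_g : \sum_i \sum_j g i j = 0.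
  rewrite /g; under eq_bigr do rewrite sumrB big_split /=.
  rewrite sumrB big_split /= [\sum_i \sum_j w j i]exchange_big /=.
  by rewrite sum_d sumr_offdiag -sumr_ord_nat; ring.
move=> i j ne_ij; have /eqP := psumr2_eq0 g_ge0 sum_g i j.
by rewrite /g ne_ij subr_eq0 => /eqP <-.
Qed.

Lemma complete_dominance_of_no_cycles :
  (forall i j, w i j * w j i = 0) -> (forall i j k, w i j * w j k * w k i = 0) ->
  (forall i j, i != j -> w i j + w j i = 1) -> complete_dominance w.
Proof.
move=> no_2cycle no_3cycle pair_sum1.
have edge_neq i j : edge w i j -> i != j.
  by apply: contraTneq => ->; apply: edge_irrefl (w_diag0 _).
have not_edge_sym i j : edge w i j -> w j i = 0.
  move=> e_ij; have /eqP := no_2cycle i j.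
  by rewrite mulf_eq0 (negbTE e_ij) /= => /eqP.
have edge_w1 i j : edge w i j -> w i j = 1.
  move=> e_ij; rewrite -(pair_sum1 i j (edge_neq i j e_ij)).
  by rewrite (not_edge_sym _ _ e_ij) addr0.
have edge_trans : transitive (edge w).
  move=> j i k e_ij e_jk; have ne_ik : i != k.
    by apply: contraTneq e_ij => ->; rewrite /edge (not_edge_sym _ _ e_jk) eqxx.
  have /eqP := no_3cycle i j k; rewrite !mulf_eq0 (negbTE e_ij) (negbTE e_jk) /=.
  move=> /eqP w_ki; have := pair_sum1 i k ne_ik.
  by rewrite w_ki addr0 /edge => ->; apply: oner_neq0.
split=> [i j ne_ij | i j e_ij | //].
- have := pair_sum1 i j ne_ij; have /eqP := no_2cycle i j.
  by rewrite /edge mulf_eq0 => /orP [] /eqP ->; rewrite ?add0r ?addr0 => ->;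
    rewrite eqxx oner_neq0.
- apply/negP => /(connect_transitive edge_trans) /orP [/eqP eq_ji|e_ji].
    by move: e_ij; rewrite eq_ji; apply/negP/edge_irrefl/w_diag0.
  by move: (edge_trans _ _ _ e_ij e_ji); apply/negP/edge_irrefl/w_diag0.
Qed.

End SpectralConverse.

Section CompleteDominance.
Variables (R : realType) (n : nat) (w : 'M[R]_n).
Hypothesis w_diag0 : forall i, w i i = 0.
Hypothesis w_tournament : is_tournament w.
Hypothesis w_acyclic : acyclic w.
Hypothesis w_edge1 : forall i j, edge w i j -> w i j = 1.
Local Notation d := (outdeg w).
Local Notation outnbr i := [set j | edge w i j].

Lemma dominance_trans : transitive (edge w).
Proof.
move=> j i k e_ij e_jk; have ne_ik : i != k.
  by apply: contraTneq e_jk => <-; apply: contraNN (w_acyclic e_ij); apply: connect1.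
have not_e_ki : ~~ edge w k i.
  apply: contraNN (w_acyclic e_ij) => e_ki.
  exact: connect_trans (connect1 e_jk) (connect1 e_ki).
by have := w_tournament ne_ik; rewrite (negbTE not_e_ki) addbF.
Qed.

Lemma outdeg_card i : d i = #|outnbr i|%:R.
Proof.
rewrite /outdeg (bigID (edge w i)) /= [X in _ + X]big1 => [|j]; last first.
  by rewrite negbK => /eqP.
rewrite addr0 (eq_bigr (fun=> 1)) => [|j /w_edge1 //].
by rewrite sumr_const cardsE.
Qed.

Lemma outnbr_proper i j : edge w i j -> outnbr j \proper outnbr i.
Proof.
move=> e_ij; apply/properP; split.
  by apply/subsetP => k; rewrite !inE; apply: dominance_trans.
by exists j; rewrite !inE ?e_ij ?edge_irrefl.
Qed.

Lemma outdeg_lt_edge i j : edge w i j -> d j < d i.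
Proof. by move=> /outnbr_proper /proper_card; rewrite !outdeg_card ltr_nat. Qed.

Lemma char_poly_laplacian_dominance :
  char_poly (laplacian w) = \prod_i ('X - (d i)%:P).
Proof.
rewrite (char_poly_potential (f := outdeg w)) => [|i j ne_ij].
  by apply: eq_bigr => i _; rewrite laplacian_diag.
by rewrite laplacian_offdiag // oppr_eq0; apply: outdeg_lt_edge.
Qed.

Lemma perm_eq_outdeg_dominance :
  perm_eq [seq d i | i <- enum 'I_n] [seq (k%:R : R) | k <- iota 0 n].
Proof.
have card_inj : injective (fun i => #|outnbr i|).
  move=> i j eq_ij; apply/eqP; apply: contraT => ne_ij.
  have [e_ij|e_ji] : edge w i j \/ edge w j i.
    by have := w_tournament ne_ij; case: (edge w i j) => /=; [left | right].
    by have := proper_card (outnbr_proper e_ij); rewrite eq_ij ltnn.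
  by have := proper_card (outnbr_proper e_ji); rewrite eq_ij ltnn.
have card_lt i : (#|outnbr i| < n)%N.
  rewrite -[n in (_ < n)%N]card_ord -cardsT; apply/proper_card/properP.
  by split; [apply: subsetT | exists i; rewrite ?inE ?edge_irrefl].
rewrite (eq_map outdeg_card) (map_comp (fun k => k%:R) (fun i => #|outnbr i|)).
by apply: perm_map; apply: perm_iota_inj.
Qed.

End CompleteDominance.

Theorem corollary2p7 (R : realType) (n : nat) (w : 'M[R]_n)
  (Hsimple : forall i : 'I_n, w i i = 0)
  (Hw : forall i j : 'I_n, 0 <= w i j <= 1) :
  complete_dominance w <->
  (char_poly (laplacian w) = \prod_(i < n) ('X - (outdeg w i)%:P)
   /\ perm_eq [seq outdeg w i | i <- enum 'I_n] [seq (k%:R : R) | k <- iota 0 n]).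
Proof.
split=> [[w_tournament w_acyclic w_edge1] | [charL deg_perm]].
  by split; [apply: char_poly_laplacian_dominance | apply: perm_eq_outdeg_dominance].
have tr_exp k : \tr (laplacian w ^+ k) = \sum_i outdeg w i ^+ k.
  exact: (mxtrace_exp_char_poly_rmorph
           (real_complex R : {rmorphism R -> complex R}) k charL).
have no_2cycle := no_2cycle_of_mxtrace Hsimple Hw (tr_exp 2).
have no_3cycle := no_3cycle_of_mxtrace Hsimple Hw no_2cycle (tr_exp 3).
have pair_sum1 := weights_pair_sum1 Hsimple Hw no_2cycle deg_perm.
exact: complete_dominance_of_no_cycles Hsimple no_2cycle no_3cycle pair_sum1.
Qed.
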